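(* For every graph $G$ and every tree $F$, $\chi_c^{\bullet}(G\,\square\, F)\leq \chi_c^{\bullet}(G)+1$, where $\square$ denotes the Cartesian product of graphs.
   Context: All graphs are finite and simple. A correspondence-cover of a graph $G$ is a pair $(L,H)$ where $H$ is a graph and $L$ maps each $v\in V(G)$ to a subset $L(v)\subseteq V(H)$ such that: the sets $L(v)$ partition $V(H)$; each $L(v)$ induces a clique in $H$; if $uv\notin E(G)$ there are no edges of $H$ between $L(u)$ and $L(v)$; if $uv\in E(G)$ the edges of $H$ between $L(u)$ and $L(v)$ form a matching. The cover is $k$-fold if $|L(v)|=k$ for all $v$. An independent transversal is an independent set of $H$ containing exactly one vertex of each $L(v)$. A cover has a fractional packing if there is a probability distribution on independent transversals $I$ with $\Pr(x\in I)=1/|L(v)|$ for all $v$ and $x\in L(v)$. $\chi_c^{\bullet}(G)$ is the least $k\ge1$ such that every $k$-fold correspondence-cover of $G$ has a fractional packing. *)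

From HB Require Import structures.
From mathcomp Require Import all_boot all_order all_algebra.
From Stdlib Require Reals.
From mathcomp Require Import Rstruct.
Set Implicit Arguments. Unset Strict Implicit. Unset Printing Implicit Defensive.
Import Order.TTheory GRing.Theory Num.Theory.
Local Open Scope ring_scope.

Definition simple_graph (V : finType) (e : rel V) : Prop :=
  symmetric e /\ irreflexive e.

Definition cart_prod (V W : finType) (e : rel V) (f : rel W) : rel (V * W) :=
  fun p q => ((p.1 == q.1) && f p.2 q.2) || ((p.2 == q.2) && e p.1 q.1).

Definition connected_graph (W : finType) (f : rel W) : Prop :=
  forall x y : W, connect f x y.
Definition acyclic_graph (W : finType) (f : rel W) : Prop :=
  forall s : seq W, uniq s -> (3 <= size s)%N -> ~~ cycle f s.
Definition is_tree (W : finType) (f : rel W) : Prop :=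
  simple_graph f /\ (0 < #|W|)%N /\ connected_graph f /\ acyclic_graph f.

Definition corr_cover (V : finType) (e : rel V) (HV : finType) (eH : rel HV)
    (L : V -> {set HV}) : Prop :=
  (forall u v : V, u != v -> [disjoint L u & L v]) /\
  (forall x : HV, exists v : V, x \in L v) /\
  (forall (v : V) (x y : HV), x \in L v -> y \in L v -> x != y -> eH x y) /\
  (forall (u v : V), u != v -> ~~ e u v ->
     forall x y : HV, x \in L u -> y \in L v -> ~~ eH x y) /\
  (forall (u v : V), e u v ->
     forall x : HV, x \in L u -> #|[set y in L v | eH x y]| <= 1)%N.

Definition kfold_corr_cover (V : finType) (e : rel V) (HV : finType) (eH : rel HV)
    (L : V -> {set HV}) (k : nat) : Prop :=
  corr_cover e eH L /\ forall v : V, #|L v| = k.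

Definition indep_transversal (V : finType) (HV : finType) (eH : rel HV)
    (L : V -> {set HV}) (I : {set HV}) : bool :=
  [forall x in I, forall y in I, ~~ eH x y] && [forall v, #|I :&: L v| == 1%N].

Definition has_frac_packing (V : finType) (HV : finType) (eH : rel HV)
    (L : V -> {set HV}) : Prop :=
  exists p : {ffun {set HV} -> Rdefinitions.R},
    (forall I, 0 <= p I) /\
    (forall I, ~~ indep_transversal eH L I -> p I = 0) /\
    (\sum_(I : {set HV}) p I = 1) /\
    (forall (v : V) (x : HV), x \in L v ->
       \sum_(I : {set HV} | x \in I) p I = (#|L v|%:R)^-1).

Definition all_kfold_pack (V : finType) (e : rel V) (k : nat) : Prop :=
  forall (HV : finType) (eH : rel HV) (L : V -> {set HV}),
    simple_graph eH -> kfold_corr_cover e eH L k -> has_frac_packing eH L.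

Definition is_chi_c_bullet (V : finType) (e : rel V) (k : nat) : Prop :=
  (1 <= k)%N /\ all_kfold_pack e k /\
  forall j : nat, (1 <= j)%N -> (j < k)%N -> ~ all_kfold_pack e j.

(* A fractional packing of a (k+1)-fold cover of G [] F is built one copy G x {w} at a
   time, adding the vertices w of the forest F in an order in which each has at most one
   earlier neighbour u.  Given a random independent transversal I of the copies added so
   far, delete one vertex from each list L(v,w): the partner of the vertex of I in L(v,u)
   under a perfect matching between L(v,u) and L(v,w) extending the edges of the cover
   (or a uniformly random vertex if w has no earlier neighbour).  Each vertex of L(v,w) is
   deleted with probability 1/(k+1), and the remaining lists form a k-fold cover of G
   with no edges to I, so a random transversal J from a packing of it extends I.  A
   vertex of L(v,w) then lies in I :|: J with probability (1 - 1/(k+1))/k = 1/(k+1). *)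

From mathcomp Require Import all_boot all_algebra.
From mathcomp Require Import Rstruct ring.
From Stdlib Require Import ClassicalEpsilon.
Set Implicit Arguments. Unset Strict Implicit. Unset Printing Implicit Defensive.
Import GRing.Theory Num.Theory.
Local Open Scope ring_scope.

Section Forest.
Variables (W : finType) (f : rel W).
Hypotheses (f_sym : symmetric f) (f_irr : irreflexive f) (f_acyc : acyclic_graph f).

Lemma acyclic_path_chord (x z : W) (s : seq W) :
  uniq (x :: s) -> path f x s -> f x z -> z \in s -> z = head x s.
Proof.
move=> us ps fxz zs; move: us ps; case/splitPr: zs => s1 s2.
case: s1 => [//|y s1] us ps; exfalso.
set c := x :: rcons (y :: s1) z.
have uc : uniq c.
  move: us; rewrite -cat_rcons; apply: subseq_uniq.
  by rewrite -cat_cons prefix_subseq.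
have sc : (3 <= size c)%N by rewrite /= size_rcons.
have cc : cycle f c.
  rewrite /c /= rcons_path rcons_path last_rcons (f_sym z) fxz andbT.
  by move: ps; rewrite cat_path /= => /and3P[/andP[-> ->] -> _].
by move: (f_acyc uc sc); rewrite cc.
Qed.

Lemma acyclic_leaf (T : {set W}) :
  T != set0 -> exists2 w, w \in T & (#|[set u in T | f w u]| <= 1)%N.
Proof.
move=> /set0Pn[x0 x0T].
have [/exists_inP[w wT leaf]|] :=
  boolP [exists w in T, #|[set u in T | f w u]| <= 1]%N; first by exists w.
rewrite negb_exists_in => /forall_inP branching.
have long_path n : exists x s,
    [/\ uniq (x :: s), path f x s, all [in T] (x :: s) & size s = n].
  elim: n => [|n [x [s [us ps sT ss]]]]; first by exists x0, [::]; rewrite /= x0T.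
  have xT : x \in T by case/andP: sT.
  have /card_gt1P[a [b [+ + ab]]] : (1 < #|[set u in T | f x u]|)%N.
    by rewrite ltnNge branching.
  rewrite !inE => /andP[aT fxa] /andP[bT fxb].
  have [z [zT fxz zh]] : exists z, [/\ z \in T, f x z & z != head x s].
    case: (eqVneq a (head x s)) => [ha|]; last by exists a.
    by exists b; rewrite -ha eq_sym.
  have zx : z != x by apply: contraTneq fxz => ->; rewrite f_irr.
  have zs : z \notin x :: s.
    by rewrite inE negb_or zx; apply: contra zh => /(acyclic_path_chord us ps fxz) ->.
  exists z, (x :: s); split; last by rewrite /= ss.
  - by rewrite cons_uniq zs us.
  - by rewrite /= (f_sym z) fxz ps.
  - by rewrite /= zT.
have [x [s [us _ _ ss]]] := long_path #|W|.
by have := max_card (mem (x :: s)); rewrite (card_uniqP us) /= ss ltnn.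
Qed.

End Forest.

Section Matchings.
Variable T : finType.

Lemma card_sep_le1W (A A' : {set T}) (P : pred T) :
  A' \subset A -> (#|[set z in A | P z]| <= 1)%N -> (#|[set z in A' | P z]| <= 1)%N.
Proof.
move=> sA; apply: leq_trans; apply: subset_leq_card; apply/subsetP=> z.
by rewrite !inE => /andP[/(subsetP sA) -> ->].
Qed.

Lemma card_sep_le1_eq (A : {set T}) (P : pred T) x y :
  (#|[set z in A | P z]| <= 1)%N -> x \in A -> y \in A -> P x -> P y -> x = y.
Proof. by move=> /card_le1_eqP eqA xA yA Px Py; apply: eqA; rewrite inE ?xA ?yA. Qed.

Variable r : rel T.

Definition partial_matching (A B : {set T}) :=
  {in A, forall a, #|[set b in B | r a b]| <= 1}%N /\
  {in B, forall b, #|[set a in A | r a b]| <= 1}%N.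

Lemma partial_matchingD1 (A B : {set T}) a b :
  partial_matching A B -> partial_matching (A :\ a) (B :\ b).
Proof.
case=> mA mB; split=> [a' | b'] /setD1P[_ ?].
  exact: card_sep_le1W (subD1set _ _) (mA a' _).
exact: (card_sep_le1W (P := r^~ b') (subD1set _ _) (mB b' _)).
Qed.

(* Match first an edge of [r] if there is one, otherwise any pair. *)
Lemma partial_matching_pair (A B : {set T}) :
  partial_matching A B -> A != set0 -> B != set0 ->
  exists a b, [/\ a \in A, b \in B &
    {in A & B, forall a' b', r a' b' -> (a' == a) = (b' == b)}].
Proof.
move=> [mA mB] /set0Pn[a0 a0A] /set0Pn[b0 b0B].
have [/exists_inP[a aA /exists_inP[b bB rab]] | ] :=
  boolP [exists a in A, exists b in B, r a b].
  exists a, b; split=> // a' b' a'A b'B ra'b'.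
  case: (eqVneq a' a) => [ea | na].
    by rewrite ea in ra'b'; rewrite (card_sep_le1_eq (mA a aA) b'B bB ra'b' rab) eqxx.
  case: (eqVneq b' b) => [eb | //]; rewrite eb in ra'b'.
  by move: na; rewrite (card_sep_le1_eq (P := r^~ b) (mB b bB) a'A aA ra'b' rab) eqxx.
rewrite negb_exists_in => /forall_inP noedge.
exists a0, b0; split=> // a' b' a'A b'B ra'b'.
by move: (noedge a' a'A) => /exists_inPn /(_ b' b'B); rewrite ra'b'.
Qed.

Lemma partial_matching_extend (A B : {set T}) :
  #|A| = #|B| -> partial_matching A B ->
  exists g : T -> T, [/\ {in A &, injective g}, {in A, forall a, g a \in B} &
    {in A & B, forall a b, r a b -> g a = b}].
Proof.
move eqn : #|A| => n; elim: n A B eqn => [|n IH] A B cA cAB mAB.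
  by exists id; split=> a; move: cA => /card0_eq ->.
have A0 : A != set0 by rewrite -card_gt0 cA.
have B0 : B != set0 by rewrite -card_gt0 -cAB.
have [a [b [aA bB ab]]] := partial_matching_pair mAB A0 B0.
have cA' : #|A :\ a| = n by move: cA; rewrite (cardsD1 a) aA => -[].
have cAB' : n = #|B :\ b| by move: cAB; rewrite (cardsD1 b) bB => -[].
have [g [g_inj gB gr]] := IH _ _ cA' cAB' (partial_matchingD1 a b mAB).
have gD1 x : x \in A -> x != a -> g x \in B :\ b.
  by move=> xA xa; apply: gB; rewrite in_setD1 xa.
exists (fun x => if x == a then b else g x); split.
- move=> x y xA yA /=.
  case: (eqVneq x a) => [-> | xa]; case: (eqVneq y a) => [-> | ya] //.
  + by move/esym/eqP; have /setD1P[/negPf ->] := gD1 y yA ya.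
  + by move/eqP; have /setD1P[/negPf ->] := gD1 x xA xa.
  + by apply: g_inj; apply/setD1P.
- move=> x xA /=; case: (eqVneq x a) => [_ | xa] //.
  by have /setD1P[] := gD1 x xA xa.
- move=> x y xA yB rxy /=; have := ab x y xA yB rxy.
  case: (eqVneq x a) => [_ /esym/eqP // | xa yb].
  by apply: gr; rewrite // !inE ?xa ?xA ?yB -?yb.
Qed.

Lemma injective_onto (g : T -> T) (A B : {set T}) :
  {in A &, injective g} -> {in A, forall a, g a \in B} -> #|A| = #|B| ->
  {in B, forall b, exists2 a, a \in A & g a = b}.
Proof.
move=> g_inj gB cAB b bB.
have /eqP gA : g @: A == B.
  rewrite eqEcard (card_in_imset g_inj) cAB leqnn andbT.
  by apply/subsetP => _ /imsetP[a /gB ? ->].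
by move: bB; rewrite -gA => /imsetP[a aA ->]; exists a.
Qed.

End Matchings.

Section EnumCast.
Variables (T : finType) (A : {set T}) (n : nat) (cardA : #|A| = n).

Definition enum_cast (j : 'I_n) : T := enum_val (cast_ord (esym cardA) j).

Lemma enum_castP j : enum_cast j \in A.
Proof. exact: enum_valP. Qed.

Lemma sum_enum_cast_eq (R : pzSemiRingType) x :
  x \in A -> \sum_(j < n) ((enum_cast j == x)%:R : R) = 1.
Proof.
move=> xA; pose jx := cast_ord cardA (enum_rank_in xA x).
have jxE : enum_cast jx = x by rewrite /enum_cast cast_ordK enum_rankK_in.
rewrite (bigD1 jx) //= jxE eqxx big1 ?addr0 // => j /negPf jxF.
case: eqP => // jE; rewrite -jE in jxE.
by move: jxF; rewrite (cast_ord_inj (enum_val_inj jxE)) eqxx.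
Qed.

End EnumCast.

Section Pushforward.
Variables (A B : finType) (R : nmodType) (h : A -> B) (F : A -> R).

Definition pushforward : {ffun B -> R} := [ffun b => \sum_(a | h a == b) F a].

Lemma sum_pushforward (P : pred B) :
  \sum_(b | P b) pushforward b = \sum_(a | P (h a)) F a.
Proof.
rewrite (partition_big h P) //=; apply: eq_bigr => b Pb; rewrite ffunE.
by apply: eq_bigl => a; case: eqP => [->|]; rewrite ?Pb ?andbF.
Qed.

Lemma pushforward_neq0 b : pushforward b != 0 -> exists2 a, h a = b & F a != 0.
Proof.
rewrite ffunE => Fb; have [/existsP[a /andP[/eqP ha Fa]] | ] :=
  boolP [exists a, (h a == b) && (F a != 0)]; first by exists a.
rewrite negb_exists => /forallP F0; move: Fb; rewrite big1 ?eqxx // => a hab.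
by move: (F0 a); rewrite hab negbK => /eqP.
Qed.

End Pushforward.

Local Notation R := Rdefinitions.R.

(* [corr_cover] without the covering condition, so that it passes to sublists. *)
Definition precover (V HV : finType) (e : rel V) (eH : rel HV) (L : V -> {set HV}) :=
  [/\ forall u v, u != v -> [disjoint L u & L v],
      forall v x y, x \in L v -> y \in L v -> x != y -> eH x y,
      forall u v, u != v -> ~~ e u v ->
        forall x y, x \in L u -> y \in L v -> ~~ eH x y &
      forall u v, e u v -> forall x, x \in L u -> #|[set y in L v | eH x y]| <= 1]%N.

Definition partial_packing (X HV : finType) (eH : rel HV) (L : X -> {set HV})
    (D : {set X}) (k : nat) (p : {ffun {set HV} -> R}) :=
  [/\ forall I, 0 <= p I, \sum_(I : {set HV}) p I = 1,
      forall I, p I != 0 -> [/\ I \subset \bigcup_(v in D) L v,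
        {in I &, forall x y, ~~ eH x y} & forall v, #|I :&: L v| = (v \in D)]
    & forall v x, v \in D -> x \in L v -> \sum_(I : {set HV} | x \in I) p I = k%:R^-1].

Section Precover.
Variables (V HV : finType) (e : rel V) (eH : rel HV) (L : V -> {set HV}).

Lemma corr_cover_precover : corr_cover e eH L -> precover e eH L.
Proof. by case=> ? [_ [? [? ?]]]. Qed.

Lemma precoverS (L' : V -> {set HV}) :
  (forall v, L' v \subset L v) -> precover e eH L -> precover e eH L'.
Proof.
move=> sL [dis cl na mat]; split.
- by move=> u v uv; apply: disjointWl (sL u) _; apply: disjointWr (sL v) _; apply: dis.
- by move=> v x y /(subsetP (sL v)) xv /(subsetP (sL v)); apply: cl.
- by move=> u v uv nuv x y /(subsetP (sL u)) xu /(subsetP (sL v)) yv; apply: (na u v).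
- by move=> u v uv x /(subsetP (sL u)) xu; apply: card_sep_le1W (sL v) (mat u v uv x xu).
Qed.

Lemma partial_packing0 k : partial_packing eH L set0 k [ffun I => (I == set0)%:R].
Proof.
split=> [I | | I | v x]; rewrite ?inE //.
- by rewrite ffunE ler0n.
- rewrite (bigD1 set0) //= ffunE eqxx big1 ?addr0 // => I /negPf I0.
  by rewrite ffunE I0.
- rewrite ffunE; case: (eqVneq I set0) => [-> _ | _]; last by rewrite eqxx.
  split=> [ | x y | v].
  + exact: sub0set.
  + by rewrite inE.
  + by rewrite set0I cards0 inE.
Qed.

Lemma partial_packing_setT k p :
  partial_packing eH L setT k p -> (forall v, #|L v| = k) -> has_frac_packing eH L.
Proof.
move=> [p_ge0 p_sum p_supp p_marg] cardL; exists p; split=> //; split; last first.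
  by split=> // v x xv; rewrite cardL (p_marg v) ?inE.
move=> I; apply: contraNeq => /p_supp[_ indI cardI]; apply/andP; split.
  by apply/forall_inP => x xI; apply/forall_inP => y yI; apply: indI.
by apply/forallP => v; rewrite cardI inE.
Qed.

Section Restriction.
Let S := {x : HV | x \in \bigcup_v L v}.
Let LS v : {set S} := [set y | val y \in L v].
Let eS : rel S := relpre val eH.

Lemma card_restrict v : #|LS v| = #|L v|.
Proof.
rewrite -(card_imset _ val_inj); apply: eq_card => x.
apply/imsetP/idP => [[y] | xv]; first by rewrite inE => ? ->.
have xU : x \in \bigcup_v L v by apply/bigcupP; exists v.
by exists (exist _ x xU); rewrite ?inE.
Qed.

Lemma restrict_corr_cover : precover e eH L -> corr_cover e eS LS.
Proof.
case=> dis cl na mat; split; [|split; [|split; [|split]]].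
- move=> u v uv; rewrite -setI_eq0; apply/eqP/setP => y; rewrite !inE.
  by apply/negbTE/andP => -[yu yv]; rewrite (disjointFr (dis u v uv) yu) in yv.
- by move=> y; have /bigcupP[v _ yv] := valP y; exists v; rewrite inE.
- move=> v x y; rewrite !inE => xv yv xy; apply: cl xv yv _.
  by apply: contra xy => /eqP/val_inj ->.
- by move=> u v uv nuv x y; rewrite !inE; apply: na.
- move=> u v uv x; rewrite inE => xu; apply/card_le1_eqP => y1 y2.
  rewrite !inE => /andP[y1v e1] /andP[y2v e2]; apply: val_inj.
  exact: card_sep_le1_eq (mat u v uv _ xu) y2v y1v e2 e1.
Qed.

Lemma partial_packing_unrestrict k :
  (forall v, #|L v| = k) -> has_frac_packing eS LS ->
  exists q, partial_packing eH L setT k q.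
Proof.
move=> cardL [pS [pS_ge0 [pS_supp [pS_sum pS_marg]]]].
exists (pushforward (fun J : {set S} => val @: J) pS); split.
- by move=> J; rewrite ffunE; apply: sumr_ge0.
- by rewrite sum_pushforward.
- move=> J /pushforward_neq0[JS <- pJS].
  have /andP[/forallP indJ /forallP cardJ] : indep_transversal eS LS JS.
    by apply: contraR pJS => /pS_supp ->.
  split.
  + apply/subsetP => _ /imsetP[y _ ->]; have /bigcupP[v _ yv] := valP y.
    by apply/bigcupP; exists v; rewrite ?inE.
  + move=> _ _ /imsetP[a aJ ->] /imsetP[b bJ ->].
    by move: (indJ a); rewrite aJ => /forall_inP/(_ b bJ).
  + move=> v; rewrite inE /= -(eqP (cardJ v)).
    rewrite -(card_imset _ val_inj); apply: eq_card => x; rewrite !inE.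
    apply/andP/imsetP => [[/imsetP[y yJ ->] yv] | [y]]; first by exists y; rewrite // !inE yJ.
    by rewrite !inE => /andP[yJ yv] ->; rewrite imset_f.
- move=> v x _ xv; rewrite sum_pushforward.
  have xU : x \in \bigcup_v L v by apply/bigcupP; exists v.
  rewrite -(cardL v) -card_restrict -(pS_marg v (exist _ x xU)) ?inE //.
  apply: eq_bigl => J; apply/imsetP/idP => [[y yJ /= xy] | xJ]; last by exists (exist _ x xU).
  by rewrite (_ : exist _ x xU = y) //; apply: val_inj.
Qed.

End Restriction.

Lemma precover_pack k :
  all_kfold_pack e k -> simple_graph eH -> precover e eH L -> (forall v, #|L v| = k) ->
  exists q, partial_packing eH L setT k q.
Proof.
move=> packG [eH_sym eH_irr] coverL cardL; apply: partial_packing_unrestrict => //.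
apply: packG; first by split=> [a b | a]; rewrite /= ?eH_irr // eH_sym.
by split; [apply: restrict_corr_cover | move=> v; rewrite card_restrict].
Qed.

End Precover.

Lemma sum_ord_div (n : nat) (a : R) : (0 < n)%N -> \sum_(j < n) a / n%:R = a.
Proof.
by move=> n_gt0; rewrite sumr_const card_ord -[_ *+ n]mulr_natr divfK // pnatr_eq0 -lt0n.
Qed.

Section Mixture.
Variables (HV : finType) (n : nat) (p : {ffun {set HV} -> R}).
Variable Q : {set HV} -> 'I_n -> {ffun {set HV} -> R}.

(* Draw [I] from [p] and [j] uniformly, then [J] from [Q I j], and return [I :|: J]. *)
Definition mixture : {ffun {set HV} -> R} :=
  pushforward (fun a : {set HV} * 'I_n * {set HV} => a.1.1 :|: a.2)
    (fun a => p a.1.1 / n%:R * Q a.1.1 a.1.2 a.2).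

Lemma sum_mixture (P : pred {set HV}) :
  \sum_(K | P K) mixture K =
  \sum_I \sum_(j < n) p I / n%:R * \sum_(J | P (I :|: J)) Q I j J.
Proof.
under [RHS]eq_bigr do under eq_bigr do rewrite mulr_sumr.
by rewrite sum_pushforward !pair_big_dep.
Qed.

Lemma mixture_neq0 K : mixture K != 0 ->
  exists I j J, [/\ K = I :|: J, p I != 0 & Q I j J != 0].
Proof.
case/pushforward_neq0 => -[[I j] J] /= <-.
rewrite !mulf_eq0 !negb_or => /andP[/andP[pI _] QJ].
by exists I, j, J.
Qed.

Hypotheses (p_ge0 : forall I, 0 <= p I) (p_sum : \sum_(I : {set HV}) p I = 1).
Hypotheses (Q_ge0 : forall I j J, p I != 0 -> 0 <= Q I j J).
Hypotheses (Q_sum : forall I j, p I != 0 -> \sum_(J : {set HV}) Q I j J = 1).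

Lemma mixture_ge0 K : 0 <= mixture K.
Proof.
rewrite ffunE sumr_ge0 // => -[[I j] J] _ /=.
have [-> | pI] := eqVneq (p I) 0; first by rewrite !mul0r.
by rewrite !mulr_ge0 ?invr_ge0 ?ler0n ?Q_ge0.
Qed.

Lemma mixture_sum : (0 < n)%N -> \sum_(K : {set HV}) mixture K = 1.
Proof.
move=> n_gt0; rewrite -p_sum (sum_mixture predT); apply: eq_bigr => I _.
have [-> | pI] := eqVneq (p I) 0; first by rewrite big1 // => j _; rewrite !mul0r.
by rewrite -[RHS](sum_ord_div (p I) n_gt0); apply: eq_bigr => j _; rewrite Q_sum ?mulr1.
Qed.

End Mixture.

Section PartialPackingFacts.
Variables (X HV : finType) (eH : rel HV) (L : X -> {set HV}).
Variables (D : {set X}) (k : nat) (p : {ffun {set HV} -> R}).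
Hypothesis packD : partial_packing eH L D k p.

Lemma partial_packing_mem I v x : p I != 0 -> x \in I -> x \in L v -> v \in D.
Proof.
move=> pI xI xv; case: packD => _ _ /(_ I pI)[_ _ cardI] _.
by rewrite -(lt0b (v \in D)) -cardI; apply/card_gt0P; exists x; rewrite inE xI.
Qed.

Lemma partial_packing_uniq I v x y :
  p I != 0 -> x \in I -> x \in L v -> y \in I -> y \in L v -> x = y.
Proof.
move=> pI xI xv yI yv; case: packD => _ _ /(_ I pI)[_ _ cardI] _.
have /card_le1_eqP : (#|I :&: L v| <= 1)%N by rewrite cardI leq_b1.
by apply; rewrite inE ?xI ?yI.
Qed.

End PartialPackingFacts.

Definition layers (V W : finType) (T : {set W}) : {set V * W} := [set vw | vw.2 \in T].

Lemma one_sub_invS_div (k : nat) : (0 < k)%N -> (1 - k.+1%:R^-1) / k%:R = k.+1%:R^-1 :> R.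
Proof.
move=> k_gt0; have k0 : k%:R != 0 :> R by rewrite pnatr_eq0 -lt0n.
by rewrite -addn1 natrD; field; rewrite k0 natr1 pnatr_eq0.
Qed.

Section CartesianProduct.
Variables (V W : finType) (e : rel V) (f : rel W) (k : nat).
Hypotheses (k_gt0 : (0 < k)%N) (packG : all_kfold_pack e k) (f_sym : symmetric f).
Variables (HV : finType) (eH : rel HV) (L : V * W -> {set HV}).
Hypothesis eH_simple : simple_graph eH.
Hypothesis coverL : kfold_corr_cover (cart_prod e f) eH L k.+1.
Implicit Types (T : {set W}) (w u : W) (p : {ffun {set HV} -> R}).
Implicit Types (del : {set HV} -> 'I_k.+1 -> V -> HV).

Let eH_sym : symmetric eH := proj1 eH_simple.
Let cardL vw : #|L vw| = k.+1. Proof. by case: coverL. Qed.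

Local Notation packs T p := (partial_packing eH L (layers V T) k.+1 p).

Lemma cover_mem_inj a b x : x \in L a -> x \in L b -> a = b.
Proof.
case: coverL => -[dis _] _ xa xb; apply/eqP; apply: contraTT xb => ab.
by rewrite (disjointFr (dis a b ab) xa).
Qed.

Lemma layer_precover w : precover e eH (fun v => L (v, w)).
Proof.
case: coverL => /corr_cover_precover[dis cl na mat] _.
have inj_w (u v : V) : u != v -> (u, w) != (v, w) by apply: contra => /eqP[->].
split=> [u v uv | v | u v uv nuv | u v uv].
- exact/dis/inj_w.
- exact: cl.
- by apply: (na _ _ (inj_w u v uv)); rewrite /cart_prod /= (negPf uv) eqxx.
- by apply: mat; rewrite /cart_prod /= eqxx uv orbT.
Qed.

Section Extension.
Variables (T : {set W}) (w : W) (p : {ffun {set HV} -> R}).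
Variable del : {set HV} -> 'I_k.+1 -> V -> HV.
Variable Q : {set HV} -> 'I_k.+1 -> {ffun {set HV} -> R}.
Hypotheses (wT : w \notin T) (packT : packs T p).
Hypothesis del_uniform : forall v x, x \in L (v, w) ->
  \sum_I \sum_(j < k.+1) p I / k.+1%:R * (del I j v == x)%:R = k.+1%:R^-1.
Hypothesis del_matched : forall I j v u x y, p I != 0 -> u \in T -> f u w ->
  x \in I -> x \in L (v, u) -> y \in L (v, w) -> eH x y -> y = del I j v.
Hypothesis Q_packs : forall I j, p I != 0 ->
  partial_packing eH (fun v => L (v, w) :\ del I j v) setT k (Q I j).

Lemma new_layer_mem I j J y vw : p I != 0 -> Q I j J != 0 -> y \in J -> y \in L vw ->
  vw.2 = w /\ y != del I j vw.1.
Proof.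
move=> pI QJ yJ yvw; case: (Q_packs j pI) => _ _ /(_ J QJ)[/subsetP sJ _ _] _.
have /bigcupP[v _] := sJ y yJ; rewrite !inE => /andP[ydel yv].
by rewrite -(cover_mem_inj yv yvw).
Qed.

Lemma extension_cross I j J x y :
  p I != 0 -> Q I j J != 0 -> x \in I -> y \in J -> ~~ eH x y.
Proof.
move=> pI QJ xI yJ.
case: (packT) => _ _ /(_ I pI)[/subsetP sI _ _] _.
case: (Q_packs j pI) => _ _ /(_ J QJ)[/subsetP sJ _ _] _.
have /bigcupP[[v1 w1]] := sI x xI; rewrite inE /= => w1T xv1.
have /bigcupP[v2 _] := sJ y yJ; rewrite !inE => /andP[ydel yv2].
apply/negP => exy; have w1w : w1 != w by apply: contraNneq wT => <-.
have : cart_prod e f (v1, w1) (v2, w).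
  apply: contraLR exy => ncp; case: coverL => /corr_cover_precover[_ _ na _] _.
  by apply: (na _ _ _ ncp) => //; apply: contra w1w => /eqP[_ ->].
rewrite /cart_prod /= (negPf w1w) orbF => /andP[/eqP/= v12 fw1w]; subst v2.
by move: ydel; rewrite (del_matched j pI w1T fw1w xI xv1 yv2 exy) eqxx.
Qed.

Lemma old_layer_mem I y vw : p I != 0 -> y \in I -> y \in L vw -> vw.2 \in T.
Proof. by move=> pI yI yvw; have := partial_packing_mem packT pI yI yvw; rewrite inE. Qed.

Lemma mixture_support K : mixture p Q K != 0 ->
  [/\ K \subset \bigcup_(vw in layers V (w |: T)) L vw, {in K &, forall x y, ~~ eH x y}
    & forall vw, #|K :&: L vw| = (vw \in layers V (w |: T))].
Proof.
case/mixture_neq0 => I [j [J [-> pI QJ]]].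
case: (packT) => _ _ /(_ I pI)[sI indI cardI] _.
case: (Q_packs j pI) => _ _ /(_ J QJ)[sJ indJ cardJ] _.
split.
- rewrite subUset; apply/andP; split.
    apply: subset_trans sI _; apply/bigcupsP => vw; rewrite inE => vwT.
    by apply: bigcup_sup; rewrite !inE vwT orbT.
  apply/subsetP => y /(subsetP sJ) /bigcupP[v _]; rewrite !inE => /andP[_ yv].
  by apply/bigcupP; exists (v, w); rewrite ?inE ?eqxx.
- move=> x y; rewrite !inE => /orP[xI | xJ] /orP[yI | yJ].
  + exact: indI.
  + exact: extension_cross pI QJ xI yJ.
  + by rewrite eH_sym; apply: extension_cross pI QJ yI xJ.
  + exact: indJ.
- move=> [v w0]; rewrite !inE /=.
  case: (eqVneq w0 w) => [-> | w0w] /=.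
    have := cardJ v; rewrite inE /= => <-; apply: eq_card => y; rewrite !inE.
    apply/andP/and3P => [[/orP[yI | yJ] yv] | [yJ ydel yv]]; last by rewrite yJ orbT.
      by move: wT; rewrite (old_layer_mem pI yI yv).
    by have [_ ydel] := new_layer_mem pI QJ yJ yv.
  have := cardI (v, w0); rewrite inE /= => <-; apply: eq_card => y; rewrite !inE.
  apply/andP/andP => [[/orP[yI | yJ] yv] | [yI yv]]; last by rewrite yI.
    by [].
  by have [/= w0E _] := new_layer_mem pI QJ yJ yv; rewrite w0E eqxx in w0w.
Qed.

Lemma mixture_marginal_new v x : x \in L (v, w) ->
  \sum_(K : {set HV} | x \in K) mixture p Q K = k.+1%:R^-1.
Proof.
move=> xv; case: (packT) => _ p_sum _ _.
have inner (I : {set HV}) (j : 'I_k.+1) : p I != 0 ->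
    \sum_(J | x \in I :|: J) Q I j J = (del I j v != x)%:R / k%:R.
  move=> pI; have xI : x \notin I.
    by apply: contraNN wT => xI; apply: old_layer_mem pI xI xv.
  under eq_bigl do rewrite in_setU (negPf xI).
  case: (Q_packs j pI) => _ _ _ Q_marg.
  have [delx | xdel] := eqVneq (del I j v) x.
    rewrite big1 ?mul0r // => J xJ; apply/eqP; apply: contraT => QJ.
    by have [_] := new_layer_mem pI QJ xJ xv; rewrite delx eqxx.
  by rewrite mul1r (Q_marg v) // !inE eq_sym xdel.
have term (I : {set HV}) (j : 'I_k.+1) : p I / k.+1%:R * \sum_(J | x \in I :|: J) Q I j J =
    (p I / k.+1%:R - p I / k.+1%:R * (del I j v == x)%:R) / k%:R.
  have [-> | pI] := eqVneq (p I) 0; first by rewrite !mul0r subrr mul0r.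
  by rewrite inner //; case: (del I j v == x) => /=; ring.
rewrite sum_mixture; under eq_bigr do under eq_bigr do rewrite term.
under eq_bigr do rewrite -mulr_suml sumrB.
rewrite -mulr_suml sumrB del_uniform //.
by under eq_bigr do rewrite sum_ord_div //; rewrite p_sum one_sub_invS_div.
Qed.

Lemma mixture_marginal_old v u x : u \in T -> x \in L (v, u) ->
  \sum_(K : {set HV} | x \in K) mixture p Q K = k.+1%:R^-1.
Proof.
move=> uT xv; case: (packT) => _ _ _ p_marg.
have uw : u != w by apply: contraNneq wT => <-.
rewrite sum_mixture -[RHS](p_marg (v, u) x) ?inE // [RHS]big_mkcond; apply: eq_bigr => I _.
have [-> | pI] := eqVneq (p I) 0; first by rewrite big1 ?if_same // => j _; rewrite !mul0r.
have inner j : \sum_(J | x \in I :|: J) Q I j J = (x \in I)%:R.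
  case: (Q_packs j pI) => _ Q_sum _ _.
  transitivity (\sum_(J | x \in I) Q I j J).
    rewrite big_mkcond [RHS]big_mkcond; apply: eq_bigr => J _; rewrite in_setU.
    have [-> | QJ] := eqVneq (Q I j J) 0; first by rewrite !if_same.
    case: (boolP (x \in J)) => xJ; last by rewrite orbF.
    by have [/= uwE _] := new_layer_mem pI QJ xJ xv; rewrite uwE eqxx in uw.
  by case: (x \in I); rewrite ?Q_sum ?big_pred0.
under eq_bigr do rewrite inner.
by rewrite -mulr_suml sum_ord_div //; case: (x \in I); rewrite ?mulr1 ?mulr0.
Qed.

Lemma packs_extend : packs (w |: T) (mixture p Q).
Proof.
case: (packT) => p_ge0 p_sum _ _; split.
- apply: mixture_ge0 => // I j J pI.
  by case: (Q_packs j pI) => Q_ge0 _ _ _; apply: Q_ge0.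
- apply: mixture_sum => // I j pI.
  by case: (Q_packs j pI).
- exact: mixture_support.
- move=> [v u] x; rewrite !inE /= => /predU1P[-> | uT].
    exact: mixture_marginal_new.
  exact: mixture_marginal_old.
Qed.

End Extension.

Lemma packs_add_vertex T w p del :
  w \notin T -> packs T p ->
  (forall I j v, p I != 0 -> del I j v \in L (v, w)) ->
  (forall v x, x \in L (v, w) ->
    \sum_I \sum_(j < k.+1) p I / k.+1%:R * (del I j v == x)%:R = k.+1%:R^-1) ->
  (forall I j v u x y, p I != 0 -> u \in T -> f u w ->
    x \in I -> x \in L (v, u) -> y \in L (v, w) -> eH x y -> y = del I j v) ->
  exists p', packs (w |: T) p'.
Proof.
move=> wT packT del_in del_uniform del_matched.
have Q_ex (a : {set HV} * 'I_k.+1) : exists q, p a.1 != 0 ->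
    partial_packing eH (fun v => L (v, w) :\ del a.1 a.2 v) setT k q.
  have [_ | pI] := eqVneq (p a.1) 0; first by exists 0.
  have cardD v : #|L (v, w) :\ del a.1 a.2 v| = k.
    by have := cardsD1 (del a.1 a.2 v) (L (v, w)); rewrite del_in // cardL add1n => -[].
  have sublists := precoverS (fun v => subD1set _ (del a.1 a.2 v)) (layer_precover w).
  by have [q packq] := precover_pack packG eH_simple sublists cardD; exists q.
have [Qf Q_packs] := fin_all_exists Q_ex.
exists (mixture p (fun I j => Qf (I, j))).
by apply: (packs_extend (del := del)) => // I j; apply: (Q_packs (I, j)).
Qed.

Lemma packs_add_isolated T w p : w \notin T -> packs T p ->
  {in T, forall u, ~~ f u w} -> exists p', packs (w |: T) p'.
Proof.
move=> wT packT isolated; case: (packT) => _ p_sum _ _.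
apply: (packs_add_vertex (del := fun I j v => enum_cast (cardL (v, w)) j) wT packT).
- by move=> I j v _; apply: enum_castP.
- move=> v x xv; under eq_bigr do rewrite -mulr_sumr sum_enum_cast_eq // mulr1.
  by rewrite -mulr_suml p_sum mul1r.
- by move=> I j v u x y _ uT fuw; move: (isolated u uT); rewrite fuw.
Qed.

Lemma layer_matching_extend v u w : f u w ->
  exists g : HV -> HV, [/\ {in L (v, u) &, injective g},
    {in L (v, u), forall a, g a \in L (v, w)} &
    {in L (v, u) & L (v, w), forall a b, eH a b -> g a = b}].
Proof.
move=> fuw; case: (coverL) => /corr_cover_precover[_ _ _ mat] _.
have edge_uw : cart_prod e f (v, u) (v, w) by rewrite /cart_prod /= eqxx fuw.
have edge_wu : cart_prod e f (v, w) (v, u) by rewrite /cart_prod /= eqxx f_sym fuw.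
apply: partial_matching_extend; first by rewrite !cardL.
split=> [a av | b bw]; first exact: mat edge_uw a av.
apply: leq_trans (mat _ _ edge_wu b bw); apply/eq_leq/eq_card => a.
by rewrite !inE eH_sym.
Qed.

Lemma packs_add_pendant T w u p : w \notin T -> packs T p -> u \in T -> f u w ->
  {in T, forall u', f u' w -> u' = u} -> exists p', packs (w |: T) p'.
Proof.
move=> wT packT uT fuw u_uniq; case: (packT) => _ _ p_supp p_marg.
have [g g_match] := fin_all_exists (fun v => layer_matching_extend v fuw).
(* The default is never used: [I] meets [L (v, u)] whenever [p I != 0]. *)
pose c (I : {set HV}) (v : V) :=
  odflt (enum_cast (cardL (v, u)) ord0) [pick y in I :&: L (v, u)].
have c_mem I v : p I != 0 -> c I v \in I :&: L (v, u).
  move=> pI; rewrite /c; case: pickP => [y // | noI].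
  have [_ _ cardI] := p_supp I pI.
  have /card_gt0P[y] : (0 < #|I :&: L (v, u)|)%N by rewrite cardI inE uT.
  by rewrite noI.
have c_eq I v x : p I != 0 -> x \in I -> x \in L (v, u) -> x = c I v.
  move=> pI xI xv; have /setIP[cI cv] := c_mem I v pI.
  by have := partial_packing_uniq packT pI xI xv cI cv.
apply: (packs_add_vertex (del := fun I j v => g v (c I v)) wT packT).
- move=> I j v pI; have [_ gB _] := g_match v.
  by apply: gB; have /setIP[] := c_mem I v pI.
- move=> v x xv; have [g_inj gB _] := g_match v.
  have [a av gax] := injective_onto g_inj gB (etrans (cardL _) (esym (cardL _))) xv.
  rewrite -[RHS](p_marg (v, u) a) ?inE // [RHS]big_mkcond; apply: eq_bigr => I _.
  have [-> | pI] := eqVneq (p I) 0; first by rewrite big1 ?if_same // => j _; rewrite !mul0r.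
  rewrite -mulr_suml sum_ord_div //; have /setIP[cI cv] := c_mem I v pI.
  have [aI | aI] := boolP (a \in I); first by rewrite -(c_eq I v a) // gax eqxx mulr1.
  case: eqP => [gcx | _]; last by rewrite mulr0.
  by move: aI; rewrite -(g_inj _ _ cv av (etrans gcx (esym gax))) cI.
- move=> I j v u' x y pI u'T fu'w xI xv yv exy; have [_ _ gr] := g_match v.
  have u'u := u_uniq u' u'T fu'w; subst u'.
  by rewrite -(c_eq I v x) // (gr x y).
Qed.

Lemma packs_add_leaf T w p : w \notin T -> packs T p ->
  (#|[set u in T | f w u]| <= 1)%N -> exists p', packs (w |: T) p'.
Proof.
move=> wT packT leaf.
have [/exists_inP[u uT fwu] | ] := boolP [exists u in T, f w u].
  apply: (packs_add_pendant wT packT uT) => [|u' u'T fu'w]; first by rewrite f_sym.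
  by apply: card_sep_le1_eq leaf u'T uT _ fwu; rewrite f_sym.
rewrite negb_exists_in => /forall_inP isolated.
by apply: (packs_add_isolated wT packT) => u' u'T; rewrite f_sym; apply: isolated.
Qed.

Hypotheses (f_irr : irreflexive f) (f_acyc : acyclic_graph f).

Lemma packs_forest T : exists p, packs T p.
Proof.
move eqn : #|T| => n; elim: n T eqn => [|n IH] T cardT.
  have -> : layers V T = set0 by apply/setP => vw; rewrite (cards0_eq cardT) !inE.
  by exists [ffun I => (I == set0)%:R]; apply: partial_packing0.
have [w wT leaf] : exists2 w, w \in T & (#|[set u in T | f w u]| <= 1)%N.
  by apply: acyclic_leaf; rewrite // -card_gt0 cardT.
have [p packT] : exists p, packs (T :\ w) p.
  by apply: IH; move: cardT; rewrite (cardsD1 w) wT => -[].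
rewrite -(setD1K wT); apply: packs_add_leaf packT _; first by rewrite setD11.
exact: card_sep_le1W (subD1set T w) leaf.
Qed.

Lemma cart_prod_has_frac_packing : has_frac_packing eH L.
Proof.
have [p packW] := packs_forest [set: W].
have layersT : layers V [set: W] = setT by apply/setP => vw; rewrite !inE.
by rewrite layersT in packW; apply: partial_packing_setT packW cardL.
Qed.

End CartesianProduct.

Lemma all_kfold_pack_cart_prod (V W : finType) (e : rel V) (f : rel W) (k : nat) :
  (0 < k)%N -> simple_graph f -> acyclic_graph f ->
  all_kfold_pack e k -> all_kfold_pack (cart_prod e f) k.+1.
Proof.
move=> k_gt0 [f_sym f_irr] f_acyc packG HV eH L eH_simple coverL.
exact: (cart_prod_has_frac_packing k_gt0 packG f_sym eH_simple coverL f_irr f_acyc).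
Qed.

Lemma ex_minn_prop (P : nat -> Prop) :
  (exists n, P n) -> exists2 m, P m & forall j, P j -> (m <= j)%N.
Proof.
pose b n := if excluded_middle_informative (P n) then true else false.
have bP n : reflect (P n) (b n).
  by rewrite /b; case: excluded_middle_informative => Pn; constructor.
move=> [n Pn]; have [|m /bP Pm m_min] := ex_minnP (ex_intro b n _); first exact/bP.
by exists m => // j /bP; apply: m_min.
Qed.

Theorem mainTheorem12 (V W : finType) (e : rel V) (f : rel W) :
  simple_graph e -> is_tree f ->
  forall k : nat, is_chi_c_bullet e k ->
  exists k' : nat, is_chi_c_bullet (cart_prod e f) k' /\ (k' <= k + 1)%N.
Proof.
move=> _ [f_simple [_ [_ f_acyc]]] k [k_gt0 [packG _]].
have packGF := all_kfold_pack_cart_prod k_gt0 f_simple f_acyc packG.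
have [|m [m_gt0 packm] m_min] :=
  ex_minn_prop (P := fun n => (1 <= n)%N /\ all_kfold_pack (cart_prod e f) n).
  by exists k.+1.
exists m; split; last by rewrite addn1; apply: m_min.
split=> //; split=> // j j_gt0 jm packj.
by move: (m_min j (conj j_gt0 packj)); rewrite leqNgt jm.
Qed.
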